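(* Let $m \geq 4$, let $D \in \mathbb{R}^{m \times 4}$ have full (column) rank, and let $b \in \mathbb{R}^m$. Let $E \in \mathbb{S}^4$ and $c \in \mathbb{R}^4$ be given by $E_{23}=E_{32}=\tfrac12$, all other entries of $E$ zero, and $c=(0,0,0,-1)^\intercal$, so that for $x=(x_1,x_2,x_3,x_4)^\intercal$ we have $r(x) := x^\intercal E x + c^\intercal x = x_2x_3 - x_4$. Consider the nonconvex problem $$\text{(NC1)}:\quad \underset{x\in\mathbb{R}^4}{\mathrm{minimize}}\ \tfrac12\|Dx-b\|_2^2 \quad \text{s.t. } r(x)=0,$$ and the convex problem $$\text{(P)}:\quad \underset{X\in\mathbb{S}^4,\ x\in\mathbb{R}^4}{\mathrm{minimize}}\ \tfrac12\operatorname{tr}(D^\intercal D X) - b^\intercal D x + \tfrac12 b^\intercal b \quad \text{s.t. } X \succeq xx^\intercal,\ \operatorname{tr}(EX)+c^\intercal x = 0.$$ Then (NC1) and (P) are equivalent (in particular, they have the same optimal value), and the optimal solution of (NC1) is attained.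
   Context: $\mathbb{S}^4$ denotes the space of real symmetric $4\times 4$ matrices, and $X \succeq xx^\intercal$ means $X - xx^\intercal$ is positive semidefinite. In the application, $x=(k_v,k_g,g_*,u)$ with $u$ a dummy variable representing $k_g g_*$, so the constraint $r(x)=0$ encodes $k_g g_* = u$. *)

From HB Require Import structures.
From mathcomp Require Import all_boot all_order all_algebra.
From mathcomp Require Import reals.
Set Implicit Arguments. Unset Strict Implicit. Unset Printing Implicit Defensive.
Import Order.TTheory GRing.Theory Num.Theory.
Local Open Scope ring_scope.

Section Defs.
Variable R : realType.

(* E in S^4 with E_23 = E_32 = 1/2 (1-based), all other entries 0. *)
Definition Emx : 'M[R]_4 :=
  \matrix_(i < 4, j < 4)
    (if ((i == 1%N :> nat) && (j == 2%N :> nat)) || ((i == 2%N :> nat) && (j == 1%N :> nat))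
     then 2^-1 else 0).

Definition cvec : 'cV[R]_4 := \col_(i < 4) (if i == 3%N :> nat then -1 else 0).

Definition rfun (x : 'cV[R]_4) : R := (x^T *m Emx *m x) 0 0 + (cvec^T *m x) 0 0.

Definition symmetric_mx n (A : 'M[R]_n) : Prop := A^T = A.

Definition psd n (A : 'M[R]_n) : Prop :=
  symmetric_mx A /\ forall v : 'cV[R]_n, 0 <= (v^T *m A *m v) 0 0.

Definition nc1_obj m (D : 'M[R]_(m, 4)) (b : 'cV[R]_m) (x : 'cV[R]_4) : R :=
  2^-1 * (((D *m x - b)^T *m (D *m x - b)) 0 0).

Definition nc1_feas (x : 'cV[R]_4) : Prop := rfun x = 0.

Definition P_obj m (D : 'M[R]_(m, 4)) (b : 'cV[R]_m) (X : 'M[R]_4) (x : 'cV[R]_4) : R :=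
  2^-1 * \tr (D^T *m D *m X) - (b^T *m D *m x) 0 0 + 2^-1 * ((b^T *m b) 0 0).

Definition P_feas (X : 'M[R]_4) (x : 'cV[R]_4) : Prop :=
  symmetric_mx X /\ psd (X - x *m x^T) /\ \tr (Emx *m X) + (cvec^T *m x) 0 0 = 0.

End Defs.

(* (P) relaxes (NC1): a feasible x of (NC1) gives the feasible pair (x x^T, x) with the
   same value.  Conversely let (X, x) be feasible for (P) and S = X - x x^T >= 0.  Then the
   objective of (P) is f(x) + tr(D^T D S)/2, where f is that of (NC1), and r(x) = -S_12.
   If S_12 <> 0, take w = S e with e = e_1 + sgn(S_12) e_2.  Along x + t w the constraint
   r is a quadratic in t whose roots a > 0 > -c satisfy a c (e^T S e) <= 1 by the
   Cauchy-Schwarz inequality for S, and averaging f over the two feasible points x + a w and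
   x - c w bounds the value of (NC1) by f(x) + a c |Dw|^2/2 <= f(x) + tr(D^T D S)/2.
   Since D has full column rank the sublevel sets of f are bounded, so f attains its
   minimum on the closed feasible set. *)

From HB Require Import structures.
From mathcomp Require Import all_boot all_order all_algebra.
From mathcomp Require Import reals ring lra.
From mathcomp Require Import boolp classical_sets topology normedtype derive.
Import Order.TTheory GRing.Theory Num.Theory.
Import numFieldNormedType.Exports.
Local Open Scope classical_set_scope.
Local Open Scope ring_scope.
Set Implicit Arguments. Unset Strict Implicit. Unset Printing Implicit Defensive.

Section QuadraticForms.
Variable R : realType.

Definition vdot n (u v : 'cV[R]_n) : R := (u^T *m v) 0 0.
Definition bform n (S : 'M[R]_n) (u v : 'cV[R]_n) : R := (u^T *m S *m v) 0 0.

Lemma vdotE n (u v : 'cV[R]_n) : vdot u v = \sum_i u i 0 * v i 0.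
Proof. by rewrite /vdot mxE; apply: eq_bigr => i _; rewrite mxE. Qed.

Lemma vdotC n (u v : 'cV[R]_n) : vdot u v = vdot v u.
Proof. by rewrite !vdotE; apply: eq_bigr => i _; rewrite mulrC. Qed.

Lemma vdotB n (u v : 'cV[R]_n) :
  vdot (u - v) (u - v) = vdot u u - 2 * vdot u v + vdot v v.
Proof.
rewrite !vdotE mulr_sumr -sumrN -!big_split /=.
by apply: eq_bigr => i _; rewrite !mxE; ring.
Qed.

Lemma vdot_chord n (u v : 'cV[R]_n) (a b : R) :
  b * vdot (u + a *: v) (u + a *: v) + a * vdot (u - b *: v) (u - b *: v)
  = (a + b) * vdot u u + a * b * (a + b) * vdot v v.
Proof.
rewrite !vdotE !mulr_sumr -!big_split /=.
by apply: eq_bigr => i _; rewrite !mxE; ring.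
Qed.

Lemma bformDl n (S : 'M[R]_n) u1 u2 v t :
  bform S (u1 + t *: u2) v = bform S u1 v + t * bform S u2 v.
Proof. by rewrite /bform linearD linearZ /= !mulmxDl -!scalemxAl !mxE. Qed.

Lemma bformDr n (S : 'M[R]_n) u v1 v2 t :
  bform S u (v1 + t *: v2) = bform S u v1 + t * bform S u v2.
Proof. by rewrite /bform mulmxDr -scalemxAr !mxE. Qed.

Lemma bformC n (S : 'M[R]_n) u v : symmetric_mx S -> bform S v u = bform S u v.
Proof.
move=> sS; rewrite /bform -[in LHS](trmxK (v^T *m S *m u)) mxE.
by rewrite !trmx_mul trmxK sS mulmxA.
Qed.

Lemma psd_cauchy_schwarz n (S : 'M[R]_n) u v :
  psd S -> bform S u v ^+ 2 <= bform S u u * bform S v v.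
Proof.
move=> [sS pS]; set a := bform S u u; set b := bform S u v; set c := bform S v v.
have quad t : 0 <= a + 2 * t * b + t ^+ 2 * c.
  suff -> : a + 2 * t * b + t ^+ 2 * c = bform S (u + t *: v) (u + t *: v).
    exact: pS.
  by rewrite bformDl !bformDr (bformC u v sS) /a /b /c; ring.
have c0 : 0 <= c := pS v.
have [c_eq0|c_neq0] := eqVneq c 0.
  have [b_eq0|b_neq0] := eqVneq b 0; first by rewrite b_eq0 c_eq0; lra.
  have := quad (- (a + 1) / (2 * b)); rewrite c_eq0 mulr0 addr0.
  have -> : 2 * (- (a + 1) / (2 * b)) * b = - (a + 1) by field.
  lra.
have c_gt0 : 0 < c by rewrite lt_def c_neq0.
have := quad (- b / c).
have -> : a + 2 * (- b / c) * b + (- b / c) ^+ 2 * c = (a * c - b ^+ 2) / c by field.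
by rewrite pmulr_lge0 ?invr_gt0 // subr_ge0.
Qed.

Lemma bform_delta n (S : 'M[R]_n) i j : bform S (delta_mx i 0) (delta_mx j 0) = S i j.
Proof. by rewrite /bform trmx_delta -rowE -colE !mxE. Qed.

Lemma mxtrace_gramE m n (D : 'M[R]_(m, n)) S :
  \tr (D^T *m D *m S) = \sum_j bform S (row j D)^T (row j D)^T.
Proof.
rewrite -mulmxA mxtrace_mulC /mxtrace; apply: eq_bigr => j _.
rewrite /bform trmxK !mxE; apply: eq_bigr => l _; rewrite !mxE; congr (_ * _).
by apply: eq_bigr => k _; rewrite !mxE.
Qed.

Lemma mxtrace_gram_psd_ge0 m n (D : 'M[R]_(m, n)) S : psd S -> 0 <= \tr (D^T *m D *m S).
Proof. by move=> [_ pS]; rewrite mxtrace_gramE sumr_ge0 // => j _; apply: pS. Qed.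

Lemma vdot_gram_psd_le m n (D : 'M[R]_(m, n)) S e : psd S ->
  vdot (D *m (S *m e)) (D *m (S *m e)) <= bform S e e * \tr (D^T *m D *m S).
Proof.
move=> psdS; rewrite vdotE mxtrace_gramE mulr_sumr; apply: ler_sum => j _.
have -> : (D *m (S *m e)) j 0 = bform S (row j D)^T e.
  by rewrite /bform trmxK -mulmxA -row_mul [RHS]mxE.
by rewrite -expr2 [leRHS]mulrC; exact: psd_cauchy_schwarz.
Qed.

(* Along [x + t *: (S *m e)] a constraint [x_i x_j - x_k = 0] is a quadratic in [t] with
   leading coefficient [(S *m e) i 0 * (S *m e) j 0]; this bounds the product of its roots. *)
Lemma psd_offdiag_direction n (S : 'M[R]_n) i j : psd S -> S i j != 0 ->
  exists e, 0 < bform S e e /\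
    bform S e e * S i j ^+ 2 <= S i j * ((S *m e) i 0 * (S *m e) j 0).
Proof.
move=> psdS Sij_neq0; have [sS pS] := psdS.
set d := S i j; pose s := Num.sg d.
pose e : 'cV[R]_n := delta_mx i 0 + s *: delta_mx j 0; exists e.
have Sji : S j i = d by rewrite -[S in LHS]sS mxE.
have Se k : (S *m e) k 0 = S k i + s * S k j.
  by rewrite mulmxDr -scalemxAr -!colE !mxE.
have -> : bform S e e = S i i + 2 * (s * d) + s ^+ 2 * S j j.
  by rewrite bformDl !bformDr !bform_delta Sji /d; ring.
rewrite !Se Sji -/d.
have sd_gt0 : 0 < s * d by rewrite /s -normrEsg normr_gt0.
have Sii_ge0 : 0 <= S i i by rewrite -bform_delta; apply: pS.
have Sjj_ge0 : 0 <= S j j by rewrite -bform_delta; apply: pS.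
have cs : d ^+ 2 <= S i i * S j j.
  by have := psd_cauchy_schwarz (delta_mx i 0) (delta_mx j 0) psdS; rewrite !bform_delta.
have s2_ge0 : 0 <= s ^+ 2 := sqr_ge0 s.
split; first by have := mulr_ge0 s2_ge0 Sjj_ge0; lra.
rewrite -subr_ge0.
(* the terms in [s ^+ 2] cancel *)
have -> : d * ((S i i + s * d) * (d + s * S j j))
          - (S i i + 2 * (s * d) + s ^+ 2 * S j j) * d ^+ 2
    = (s * d) * (S i i * S j j - d ^+ 2) by ring.
by rewrite mulr_ge0 ?subr_ge0 // ltW.
Qed.

Lemma quadratic_opposite_roots (A B C : R) : A * C < 0 ->
  exists a b, [/\ 0 < a, 0 < b, A * a ^+ 2 + B * a + C = 0,
                  A * b ^+ 2 - B * b + C = 0 & A * (a * b) = - C].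
Proof.
move=> AC_lt0; have A_neq0 : A != 0.
  by apply: contraTneq AC_lt0 => ->; rewrite mul0r ltxx.
pose d := B / A; pose P := - C / A.
have P_gt0 : 0 < P.
  have -> : P = - (A * C) / A ^+ 2 by rewrite /P; field.
  by rewrite divr_gt0 ?oppr_gt0 // exprn_even_gt0.
pose r := Num.sqrt (d ^+ 2 + 4 * P).
have r2 : r ^+ 2 = d ^+ 2 + 4 * P.
  by rewrite sqr_sqrtr // addr_ge0 ?sqr_ge0 // mulr_ge0 // ltW.
have r_ge0 : 0 <= r := sqrtr_ge0 _.
exists ((r - d) / 2), ((r + d) / 2); split.
- by rewrite divr_gt0 //; nra.
- by rewrite divr_gt0 //; nra.
- have -> : A * ((r - d) / 2) ^+ 2 + B * ((r - d) / 2) + C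
            = A * ((r ^+ 2 - d ^+ 2) / 4 - P) by rewrite /d /P; field.
  by rewrite r2; field.
- have -> : A * ((r + d) / 2) ^+ 2 - B * ((r + d) / 2) + C
            = A * ((r ^+ 2 - d ^+ 2) / 4 - P) by rewrite /d /P; field.
  by rewrite r2; field.
- have -> : (r - d) / 2 * ((r + d) / 2) = (r ^+ 2 - d ^+ 2) / 4 by field.
  by rewrite r2 /P; field.
Qed.

End QuadraticForms.

Section Relaxation.
Variable R : realType.

Local Notation i1 := (@Ordinal 4 1 isT).
Local Notation i2 := (@Ordinal 4 2 isT).
Local Notation i3 := (@Ordinal 4 3 isT).

Lemma big_ord4 (F : 'I_4 -> R) : \sum_i F i = F 0 + F i1 + F i2 + F i3.
Proof.
rewrite !big_ord_recl big_ord0 addr0 !addrA.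
by congr (_ + _ + _ + _); apply: congr1; apply: val_inj.
Qed.

Lemma rfunE (x : 'cV[R]_4) : rfun x = x i1 0 * x i2 0 - x i3 0.
Proof. by rewrite /rfun !(mxE, big_ord4) /=; field. Qed.

Lemma rfun_line (x w : 'cV[R]_4) t : rfun (x + t *: w) =
  rfun x + t * (x i1 0 * w i2 0 + x i2 0 * w i1 0 - w i3 0) + t ^+ 2 * (w i1 0 * w i2 0).
Proof. by rewrite !rfunE !mxE; ring. Qed.

Lemma mxtrace_EmxE (X : 'M[R]_4) : \tr (Emx R *m X) = 2^-1 * (X i1 i2 + X i2 i1).
Proof. by rewrite /mxtrace !(mxE, big_ord4) /=; field. Qed.

Lemma cvecE (x : 'cV[R]_4) : ((cvec R)^T *m x) 0 0 = - x i3 0.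
Proof. by rewrite !(mxE, big_ord4) /=; field. Qed.

Lemma P_feas_rfun (X : 'M[R]_4) (x : 'cV[R]_4) :
  P_feas X x -> rfun x = - (X - x *m x^T) i1 i2.
Proof.
case=> sX [_]; rewrite rfunE mxtrace_EmxE cvecE !mxE big_ord1 !mxE.
have -> : X i2 i1 = X i1 i2 by rewrite -[X in LHS]sX mxE.
lra.
Qed.

Lemma P_obj_split m (D : 'M[R]_(m, 4)) b (X : 'M[R]_4) x :
  P_obj D b X x = nc1_obj D b x + 2^-1 * \tr (D^T *m D *m (X - x *m x^T)).
Proof.
have -> : \tr (D^T *m D *m (X - x *m x^T))
          = \tr (D^T *m D *m X) - vdot (D *m x) (D *m x).
  rewrite mulmxBr linearB /= (mulmxA (D^T *m D) x) (mxtrace_mulC (D^T *m D *m x)).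
  by rewrite /mxtrace big_ord1 /vdot trmx_mul !mulmxA.
rewrite /P_obj /nc1_obj -/(vdot b b) -/(vdot (D *m x - b) (D *m x - b)) vdotB.
by rewrite -(mulmxA b^T) -/(vdot b (D *m x)) (vdotC b); field.
Qed.

Lemma P_feas_lift (x : 'cV[R]_4) : nc1_feas x -> P_feas (x *m x^T) x.
Proof.
move=> rx0; split; first by rewrite /symmetric_mx trmx_mul trmxK.
split.
  by rewrite subrr; split=> [|v]; rewrite ?/symmetric_mx ?trmx0 // mulmx0 mul0mx mxE.
by rewrite mulmxA mxtrace_mulC /mxtrace big_ord1 !mulmxA; exact: rx0.
Qed.

Lemma nc1_obj_chord m (D : 'M[R]_(m, 4)) b x w (a c p : R) : 0 < a -> 0 < c ->
  p <= nc1_obj D b (x + a *: w) -> p <= nc1_obj D b (x - c *: w) ->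
  p <= nc1_obj D b x + 2^-1 * (a * c) * vdot (D *m w) (D *m w).
Proof.
move=> a_gt0 c_gt0; rewrite /nc1_obj.
have -> : D *m (x + a *: w) - b = (D *m x - b) + a *: (D *m w).
  by rewrite mulmxDr scalemxAr addrAC.
have -> : D *m (x - c *: w) - b = (D *m x - b) - c *: (D *m w).
  by rewrite mulmxBr scalemxAr addrAC.
rewrite -!/(vdot _ _) => pa pc.
have := vdot_chord (D *m x - b) (D *m w) a c.
rewrite -(@ler_pM2l _ (a + c)) ?addr_gt0 //; nra.
Qed.

Lemma P_obj_ge_nc1_lower_bound m (D : 'M[R]_(m, 4)) b p :
  (forall x, nc1_feas x -> p <= nc1_obj D b x) ->
  forall X x, P_feas X x -> p <= P_obj D b X x.
Proof.
move=> hp X x feas; have rx := P_feas_rfun feas; case: feas => _ [psdS _].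
rewrite P_obj_split; move: psdS rx; set S := X - x *m x^T => psdS rx.
have T_ge0 := mxtrace_gram_psd_ge0 D psdS.
have [rx0|rx_neq0] := eqVneq (rfun x) 0.
  have : 0 <= 2^-1 * \tr (D^T *m D *m S) by rewrite mulr_ge0 ?invr_ge0.
  by have := hp x rx0; lra.
have S12 : S i1 i2 = - rfun x by rewrite rx opprK.
have S12_neq0 : S i1 i2 != 0 by rewrite S12 oppr_eq0.
have [e [k_gt0]] := psd_offdiag_direction psdS S12_neq0.
rewrite S12 sqrrN; set w := S *m e; set k := bform S e e; set q := w i1 0 * w i2 0 => ke.
have qr_lt0 : q * rfun x < 0.
  have : 0 < k * rfun x ^+ 2 by rewrite mulr_gt0 // exprn_even_gt0.
  lra.
have [a [c [a_gt0 c_gt0 ra rc ac]]] :=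
  quadratic_opposite_roots (x i1 0 * w i2 0 + x i2 0 * w i1 0 - w i3 0) qr_lt0.
have fa : nc1_feas (x + a *: w) by rewrite /nc1_feas rfun_line -/q -ra; ring.
have fc : nc1_feas (x - c *: w) by rewrite /nc1_feas -scaleNr rfun_line -/q -rc; ring.
apply: le_trans (nc1_obj_chord a_gt0 c_gt0 (hp _ fa) (hp _ fc)) _.
rewrite lerD2l -mulrA ler_pM2l ?invr_gt0 //.
have ack : a * c * k <= 1.
  have q_neq0 : q != 0 by apply: contraTneq qr_lt0 => ->; rewrite mul0r ltxx.
  have pos : 0 < q ^+ 2 * (a * c) by rewrite mulr_gt0 ?exprn_even_gt0 ?mulr_gt0.
  rewrite -(ler_pM2l pos) mulr1.
  have -> : q ^+ 2 * (a * c) * (a * c * k) = k * rfun x ^+ 2.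
    by rewrite -[rfun x]opprK -ac; ring.
  by have -> : q ^+ 2 * (a * c) = - rfun x * q by rewrite -ac; ring.
apply: le_trans (ler_wpM2l (ltW (mulr_gt0 a_gt0 c_gt0)) (vdot_gram_psd_le D e psdS)) _.
by rewrite -/k mulrA -[leRHS]mul1r ler_wpM2r.
Qed.

End Relaxation.

Section EntrywiseContinuity.
Variable R : realType.

Definition entrywise_continuous (T : topologicalType) p q (F : T -> 'M[R]_(p, q)) :=
  forall i j, continuous (fun t => F t i j).

Lemma entrywise_continuous_cst (T : topologicalType) p q (M : 'M[R]_(p, q)) :
  entrywise_continuous (fun _ : T => M).
Proof. by move=> i j; exact: cst_continuous. Qed.

Lemma entrywise_continuous_id p q : entrywise_continuous (@id 'M[R]_(p, q)).
Proof. by move=> i j; exact: coord_continuous. Qed.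

Lemma entrywise_continuous_tr (T : topologicalType) p q (F : T -> 'M[R]_(p, q)) :
  entrywise_continuous F -> entrywise_continuous (fun t => (F t)^T).
Proof. by move=> cF i j; under eq_fun do rewrite mxE; exact: cF. Qed.

Lemma entrywise_continuousB (T : topologicalType) p q (F G : T -> 'M[R]_(p, q)) :
  entrywise_continuous F -> entrywise_continuous G ->
  entrywise_continuous (fun t => F t - G t).
Proof.
move=> cF cG i j; under eq_fun do rewrite !mxE.
by move=> t; apply: continuousB; [exact: cF | exact: cG].
Qed.

Lemma entrywise_continuous_mulmx (T : topologicalType) p q r
    (F : T -> 'M[R]_(p, q)) (G : T -> 'M[R]_(q, r)) :
  entrywise_continuous F -> entrywise_continuous G ->
  entrywise_continuous (fun t => F t *m G t).
Proof.
move=> cF cG i j; under eq_fun do rewrite mxE.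
apply: continuous_big => [|k _]; first exact: add_continuous.
by move=> t; apply: continuousM; [exact: cF | exact: cG].
Qed.

End EntrywiseContinuity.

Section Attainment.
Variable R : realType.

Lemma continuous_rfun_tr : continuous (fun y : 'rV[R]_4 => rfun y^T).
Proof.
have cy := entrywise_continuous_tr (@entrywise_continuous_id R 1 4).
have cEy := entrywise_continuous_mulmx (entrywise_continuous_tr cy)
  (entrywise_continuous_cst (M := Emx R)).
move=> y; apply: continuousD.
  exact: (entrywise_continuous_mulmx cEy cy) 0 0 y.
exact: (entrywise_continuous_mulmx (entrywise_continuous_cst (M := (cvec R)^T)) cy)
  0 0 y.
Qed.

Lemma continuous_nc1_obj_tr m (D : 'M[R]_(m, 4)) b :
  continuous (fun y : 'rV[R]_4 => nc1_obj D b y^T).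
Proof.
have cy := entrywise_continuous_tr (@entrywise_continuous_id R 1 4).
have cu : entrywise_continuous (fun y : 'rV[R]_4 => D *m y^T - b).
  exact: entrywise_continuousB
    (entrywise_continuous_mulmx (entrywise_continuous_cst (M := D)) cy)
    (entrywise_continuous_cst (M := b)).
move=> y; apply: (continuousM (s := fun=> 2^-1)); first exact: cst_continuous.
exact: (entrywise_continuous_mulmx (entrywise_continuous_tr cu) cu) 0 0 y.
Qed.

Lemma bounded_set_rV_entries n (A : set 'rV[R]_n) (K : R) :
  (forall y, A y -> forall j, `|y 0 j| <= K) -> bounded_set A.
Proof.
move=> AK; exists `|K|; split; first exact: num_real.
move=> M KM y Ay; rewrite /= -[`|y|]/(mx_norm y) mx_normrE.
apply: bigmax_le => [|[i j] _ /=]; first exact: le_trans (ltW KM).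
rewrite (ord1 i); apply: le_trans (AK _ Ay j) _.
exact: le_trans (ler_norm K) (ltW KM).
Qed.

Lemma full_col_rank_left_inverse m n (D : 'M[R]_(m, n)) :
  \rank D = n -> exists L : 'M[R]_(n, m), L *m D = 1%:M.
Proof.
move=> rD; have /row_freeP [B DB] : row_free D^T by rewrite /row_free mxrank_tr rD.
by exists B^T; rewrite -[D]trmxK -trmx_mul DB trmx1.
Qed.

Lemma sublevel_entries_bounded m n (D : 'M[R]_(m, n)) b (c : R) : \rank D = n ->
  exists K, forall x, vdot (D *m x - b) (D *m x - b) <= c -> forall k, `|x k 0| <= K.
Proof.
move=> /full_col_rank_left_inverse [L LD].
pose Kk k := \sum_j `|L k j| * (1 + `|c| + `|b j 0|).
have Kk_ge0 k : 0 <= Kk k by rewrite sumr_ge0 // => j _; rewrite mulr_ge0 // !addr_ge0.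
exists (\sum_k Kk k) => x ux k.
apply: le_trans (_ : Kk k <= _); last first.
  by rewrite (bigD1 k) //= lerDl sumr_ge0.
set u := D *m x - b.
have uj j : `|u j 0| <= 1 + `|c|.
  have : u j 0 ^+ 2 <= `|c|.
    apply: le_trans (le_trans ux (ler_norm c)); rewrite vdotE (bigD1 j) //= expr2 lerDl.
    by rewrite sumr_ge0 // => i _; rewrite -expr2 sqr_ge0.
  rewrite -real_normK ?num_real //; have := normr_ge0 (u j 0); nra.
have -> : x = L *m (u + b) by rewrite /u subrK mulmxA LD mul1mx.
rewrite mxE; apply: (le_trans (ler_norm_sum _ _ _)); apply: ler_sum => j _.
rewrite normrM ler_wpM2l // mxE; apply: (le_trans (ler_normD _ _)).
by rewrite lerD2r.
Qed.

Lemma nc1_attained m (D : 'M[R]_(m, 4)) b : \rank D = 4 ->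
  exists xs, nc1_feas xs /\ forall x, nc1_feas x -> nc1_obj D b xs <= nc1_obj D b x.
Proof.
move=> rD; pose g (y : 'rV[R]_4) := nc1_obj D b y^T.
pose A := (fun y => rfun y^T) @^-1` [set r | r = 0] `&` g @^-1` [set r | r <= g 0].
have A_closed : closed A.
  apply: closedI; apply: preimage_closed; rewrite ?closed_eq ?closed_le // => y _.
    exact: continuous_rfun_tr.
  exact: continuous_nc1_obj_tr.
have [K xK] := sublevel_entries_bounded b (2 * g 0) rD.
have A_bounded : bounded_set A.
  apply: (@bounded_set_rV_entries _ _ K) => y [_ gy] j.
  suff /xK/(_ j) : vdot (D *m y^T - b) (D *m y^T - b) <= 2 * g 0 by rewrite mxE.
  by move: gy; rewrite /= /g /nc1_obj -/(vdot _ _); lra.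
have A0 : A 0 by split; rewrite /= ?trmx0 ?rfunE ?mxE ?mulr0 ?subrr.
have [c Ac c_min] := EVT_min_rV (ex_intro _ 0 A0)
  (bounded_closed_compact A_bounded A_closed)
  (continuous_subspaceT (@continuous_nc1_obj_tr m D b)).
move: Ac; rewrite inE => -[rc gc0].
exists c^T; split=> // x rx; rewrite -[x]trmxK -/(g c) -/(g x^T).
have [gx|/ltW gx] := leP (g x^T) (g 0); last exact: le_trans gx.
by apply: c_min; rewrite inE; split; rewrite /= ?trmxK.
Qed.

End Attainment.

Theorem lemma1 (R : realType) (m : nat) (D : 'M[R]_(m, 4)) (b : 'cV[R]_m) :
  (4 <= m)%N -> \rank D = 4%N ->
  exists xs : 'cV[R]_4,
    (* xs is an optimal (attained) solution of (NC1) *)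
    nc1_feas xs /\ (forall x, nc1_feas x -> nc1_obj D b xs <= nc1_obj D b x) /\
    (* (P) has the same optimal value, also attained *)
    (forall X x, P_feas X x -> nc1_obj D b xs <= P_obj D b X x) /\
    (exists Xs xs', P_feas Xs xs' /\ P_obj D b Xs xs' = nc1_obj D b xs).
Proof.
move=> _ rD; have [xs [rxs xs_min]] := nc1_attained b rD.
exists xs; split=> //; split=> //; split; first exact: P_obj_ge_nc1_lower_bound.
exists (xs *m xs^T), xs; split; first exact: P_feas_lift.
by rewrite P_obj_split subrr mulmx0 linear0 mulr0 addr0.
Qed.
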